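(* Let $\mathcal{I}\in\mathrm{Ins}(\Omega,\mathcal{H},\mathcal{K})$ be an indecomposable instrument. Then every instrument $\mathcal{J}\in\mathrm{Ins}(\Lambda,\mathcal{H},\mathcal{V})$ that is compatible with $\mathcal{I}$ is of the form $\mathcal{J}_y(\varrho)=\sum_{x\in\Omega}\mathrm{tr}[\nu_{xy}\mathsf{A}^{\mathcal{I}}(x)\varrho]\,\xi_{xy}$ for all $y\in\Lambda$ and states $\varrho$, for some family of states $\{\xi_{xy}\}_{x\in\Omega,y\in\Lambda}$ on $\mathcal{V}$ and some stochastic matrix $\nu=(\nu_{xy})_{x\in\Omega,y\in\Lambda}$ (i.e. $\nu_{xy}\ge 0$ and $\sum_y\nu_{xy}=1$ for all $x$).
   Context: All Hilbert spaces are finite-dimensional and complex, and all outcome sets are finite. An instrument $\mathcal{I}\in\mathrm{Ins}(\Omega,\mathcal{H},\mathcal{K})$ is a family $(\mathcal{I}_x)_{x\in\Omega}$ of completely positive trace-nonincreasing linear maps $\mathcal{L}(\mathcal{H})\to\mathcal{L}(\mathcal{K})$ whose sum is trace preserving; its induced POVM is given by $\mathrm{tr}[\mathsf{A}^{\mathcal{I}}(x)\varrho]=\mathrm{tr}[\mathcal{I}_x(\varrho)]$. $\mathcal{I}$ is indecomposable if each nonzero $\mathcal{I}_x$ has Kraus rank 1, i.e. $\mathcal{I}_x(\varrho)=K_x\varrho K_x^*$ for some operator $K_x:\mathcal{H}\to\mathcal{K}$. Two instruments $\mathcal{I}\in\mathrm{Ins}(\Omega,\mathcal{H},\mathcal{K})$,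 $\mathcal{J}\in\mathrm{Ins}(\Lambda,\mathcal{H},\mathcal{V})$ are compatible if there is $\mathcal{G}\in\mathrm{Ins}(\Omega\times\Lambda,\mathcal{H},\mathcal{K}\otimes\mathcal{V})$ with $\sum_{x}\mathrm{tr}_{\mathcal{K}}[\mathcal{G}_{(x,y)}(\varrho)]=\mathcal{J}_y(\varrho)$ for all $y$ and $\sum_y\mathrm{tr}_{\mathcal{V}}[\mathcal{G}_{(x,y)}(\varrho)]=\mathcal{I}_x(\varrho)$ for all $x$, for all states $\varrho$. *)

From HB Require Import structures.
From mathcomp Require Import all_boot all_order all_algebra all_field.
Set Implicit Arguments. Unset Strict Implicit. Unset Printing Implicit Defensive.
Import Order.TTheory GRing.Theory Num.Theory.
Local Open Scope ring_scope.

(* The Hilbert space C^n is represented by its dimension n; L(C^n) = 'M[algC]_n. *)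
Notation Mat n := 'M[algC]_n.

Definition adjmx m n (A : 'M[algC]_(m, n)) : 'M[algC]_(n, m) :=
  \matrix_(i, j) (A j i)^*.

Definition psd n (A : Mat n) : Prop :=
  forall v : 'cV[algC]_n, 0 <= (adjmx v *m A *m v) 0 0.

Definition state n (rho : Mat n) : Prop := psd rho /\ \tr rho = 1.

Definition linmap n m (f : Mat n -> Mat m) : Prop :=
  forall (a : algC) (A B : Mat n), f (a *: A + B) = a *: f A + f B.

(* Tensor product convention: the basis vector e_i (x) e_a of C^k (x) C^n is
   the index mxvec_index i a of C^(k*n). *)

(* the (i,j) block <i|X|j> in L(C^n) of X in L(C^k (x) C^n) *)
Definition blk k n (X : Mat (k * n)) (i j : 'I_k) : Mat n :=
  \matrix_(a, b) X (mxvec_index i a) (mxvec_index j b).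

(* |i><j| (x) Y *)
Definition embblk k n (i j : 'I_k) (Y : Mat n) : Mat (k * n) :=
  \matrix_(p, q) \sum_(a < n) \sum_(b < n)
     ((p == mxvec_index i a) && (q == mxvec_index j b))%:R * Y a b.

(* id_k (x) f *)
Definition ampl k n m (f : Mat n -> Mat m) (X : Mat (k * n)) : Mat (k * m) :=
  \sum_(i < k) \sum_(j < k) embblk i j (f (blk X i j)).

Definition cp n m (f : Mat n -> Mat m) : Prop :=
  forall k (X : Mat (k * n)), psd X -> psd (ampl f X).

Definition trace_nonincr n m (f : Mat n -> Mat m) : Prop :=
  forall X : Mat n, psd X -> \tr (f X) <= \tr X.

Definition instrument (Omega : finType) h k (I : Omega -> Mat h -> Mat k) : Prop :=
  (forall x, [/\ linmap (I x), cp (I x) & trace_nonincr (I x)]) /\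
  (forall X : Mat h, \tr (\sum_x I x X) = \tr X).

Definition induced_povm (Omega : finType) h k (I : Omega -> Mat h -> Mat k)
  (A : Omega -> Mat h) : Prop :=
  forall x (rho : Mat h), state rho -> \tr (A x *m rho) = \tr (I x rho).

(* indecomposable: each nonzero I_x has Kraus rank 1 *)
Definition indecomposable (Omega : finType) h k (I : Omega -> Mat h -> Mat k) : Prop :=
  forall x, (exists rho : Mat h, I x rho != 0) ->
    exists K : 'M[algC]_(k, h), forall rho : Mat h, I x rho = K *m rho *m adjmx K.

Definition ptr1 k v (X : Mat (k * v)) : Mat v :=
  \matrix_(a, b) \sum_(i < k) X (mxvec_index i a) (mxvec_index i b).
Definition ptr2 k v (X : Mat (k * v)) : Mat k :=
  \matrix_(i, j) \sum_(a < v) X (mxvec_index i a) (mxvec_index j a).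

Definition compatible (Omega Lambda : finType) h k v
  (I : Omega -> Mat h -> Mat k) (J : Lambda -> Mat h -> Mat v) : Prop :=
  exists G : (Omega * Lambda)%type -> Mat h -> Mat (k * v),
    instrument G /\
    (forall y (rho : Mat h), state rho -> \sum_x ptr1 (G (x, y) rho) = J y rho) /\
    (forall x (rho : Mat h), state rho -> \sum_y ptr2 (G (x, y) rho) = I x rho).

(* By compatibility, I_x is the output-K marginal of sum_y G_(x,y), and indecomposability makes
   it rho |-> K rho K^*.  Hence the Choi kernels P_y of the G_(x,y), which are positive by complete
   positivity, have V-partial traces summing to the rank-one kernel c c^* with c = vec K.  Every
   vector u (x) e_b with u orthogonal to c is then isotropic, hence in the kernel, for all P_y; this
   forces P_y = c c^* (x) R_y with R_y >= 0 and sum_y tr R_y = 1.  Tracing out K gives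
   tr_K G_(x,y)(rho) = tr[K rho K^*] R_y = tr[A(x) rho] nu_(x,y) xi_(x,y) with nu_(x,y) = tr R_y
   and xi_(x,y) = R_y / nu_(x,y), and summing over x yields J_y. *)

From HB Require Import structures.
From mathcomp Require Import all_boot all_order all_algebra all_field.
From mathcomp Require Import ring.
From Stdlib Require Import Classical_Prop.
Import Order.TTheory GRing.Theory Num.Theory.
Set Implicit Arguments. Unset Strict Implicit. Unset Printing Implicit Defensive.
Local Open Scope ring_scope.

Section KernelForm.
Variable T : finType.
Implicit Types (P : T -> T -> algC) (w z : T -> algC).

Definition form P w z := \sum_s \sum_t (w s)^* * P s t * z t.
Definition posform P := forall w, 0 <= form P w w.
Definition ket (s0 : T) : T -> algC := fun s => (s == s0)%:R.

Definition vnorm2 w := \sum_s w s * (w s)^*.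

Lemma vnorm2_ge0 w : 0 <= vnorm2 w.
Proof. by apply: sumr_ge0 => s _; apply: mul_conjC_ge0. Qed.

Lemma vnorm2_eq0 w : vnorm2 w = 0 -> forall s, w s = 0.
Proof.
move=> /psumr_eq0P w0 s; apply/eqP; rewrite -mul_conjC_eq0; apply/eqP.
by apply: w0 => // s' _; apply: mul_conjC_ge0.
Qed.

Lemma sum_ket s0 (F : T -> algC) : \sum_s ket s0 s * F s = F s0.
Proof.
rewrite (bigD1 s0) //= big1 => [|s /negbTE s_neq]; first by rewrite /ket eqxx mul1r addr0.
by rewrite /ket s_neq mul0r.
Qed.

Lemma eq_form P w w' z z' : w =1 w' -> z =1 z' -> form P w z = form P w' z'.
Proof. by move=> ew ez; apply: eq_bigr => s _; apply: eq_bigr => t _; rewrite ew ez. Qed.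

Lemma eq_form_kernel P P' w z : P =2 P' -> form P w z = form P' w z.
Proof. by move=> eP; apply: eq_bigr => s _; apply: eq_bigr => t _; rewrite eP. Qed.

Lemma eq_posform P P' : P =2 P' -> posform P -> posform P'.
Proof. by move=> eP P_ge0 w; rewrite -(eq_form_kernel _ _ eP). Qed.

Lemma formDr P w a z1 z2 :
  form P w (fun t => a * z1 t + z2 t) = a * form P w z1 + form P w z2.
Proof.
rewrite /form big_distrr -big_split; apply: eq_bigr => s _ /=.
by rewrite big_distrr -big_split; apply: eq_bigr => t _ /=; ring.
Qed.

Lemma formDl P z a w1 w2 :
  form P (fun s => a * w1 s + w2 s) z = a^* * form P w1 z + form P w2 z.
Proof.
rewrite /form big_distrr -big_split; apply: eq_bigr => s _ /=.
by rewrite big_distrr -big_split; apply: eq_bigr => t _ /=; rewrite rmorphD rmorphM; ring.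
Qed.

Lemma form_ket P s t : form P (ket s) (ket t) = P s t.
Proof.
rewrite /form -(sum_ket s (fun s' => P s' t)); apply: eq_bigr => s' _.
rewrite -(sum_ket t (P s')) big_distrr; apply: eq_bigr => t' _ /=.
by rewrite /ket rmorph_nat; ring.
Qed.

Lemma posform_hermitian P : posform P -> forall s t, P s t = (P t s)^*.
Proof.
move=> P_ge0 s t.
have real_diag u : (P u u)^* = P u u by apply: geC0_conj; rewrite -form_ket.
have real_mix l : let r := l^* * (l * P t t + P t s) + (l * P s t + P s s) in r^* = r.
  apply: geC0_conj; have := P_ge0 (fun u => l * ket t u + ket s u).
  by rewrite formDl !formDr !form_ket.
have := real_mix 1; have := real_mix 'i.
rewrite /= !(rmorphD, rmorphM, rmorphN, conjCK, rmorph1, mul1r) /= !real_diag conjCK !conjCi.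
set X := P s t; set Y := P t s => e_i e_1.
have sum_conj : X^* + Y^* = X + Y.
  apply: (addrI (P t t + P s s)).
  by transitivity (P t t + Y^* + (X^* + P s s)); [ring | rewrite e_1; ring].
have diff_conj : Y^* - X^* = X - Y.
  apply: (mulfI (neq0Ci algC)); apply: (addrI (P s s - 'i * 'i * P t t)).
  by transitivity ('i * (- 'i * P t t + Y^*) + (- 'i * X^* + P s s)); [ring | rewrite e_i; ring].
apply: (pmulrnI (isT : (0 < 2)%N)).
by transitivity ((X + Y) + (X - Y)); [ring | rewrite -sum_conj -diff_conj; ring].
Qed.

Lemma formC P w z : posform P -> form P w z = (form P z w)^*.
Proof.
move=> P_ge0; rewrite /form rmorph_sum exchange_big; apply: eq_bigr => s _.
rewrite rmorph_sum; apply: eq_bigr => t _.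
by rewrite !rmorphM /= conjCK (posform_hermitian P_ge0 s t) conjCK; ring.
Qed.

Lemma form_sum (I : finType) (Q : I -> T -> T -> algC) w z :
  \sum_i form (Q i) w z = form (fun s t => \sum_i Q i s t) w z.
Proof.
rewrite exchange_big; apply: eq_bigr => s _; rewrite exchange_big; apply: eq_bigr => t _.
by rewrite -mulr_suml -mulr_sumr.
Qed.

Lemma formMr P d w z : form (fun s t => P s t * d) w z = form P w z * d.
Proof.
rewrite /form mulr_suml; apply: eq_bigr => s _.
by rewrite mulr_suml; apply: eq_bigr => t _; ring.
Qed.

Lemma form_rank1 (c u : T -> algC) :
  form (fun s t => c s * (c t)^*) u u = (\sum_s (u s)^* * c s) * (\sum_s (u s)^* * c s)^*.
Proof.
rewrite /form rmorph_sum big_distrl; apply: eq_bigr => s _ /=.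
by rewrite big_distrr; apply: eq_bigr => t _ /=; rewrite rmorphM /= conjCK; ring.
Qed.

(* Positivity at [w - b r z] with [r = 1 / (q + 1)] reads [- |b|^2 r^2 (q + 2) >= 0]. *)
Lemma posform_isotropic P w : posform P -> form P w w = 0 -> forall z, form P z w = 0.
Proof.
move=> P_ge0 ww0 z.
set b := form P z w; set q := form P z z.
have q_ge0 : 0 <= q by apply: P_ge0.
have q1_gt0 : 0 < q + 1 by rewrite ltr_wpDl.
set r := (q + 1)^-1.
have r_real : r^* = r by apply: geC0_conj; rewrite invr_ge0 ltW.
have := P_ge0 (fun u => - b * r * z u + w u).
rewrite formDl !formDr ww0 -/b -/q (formC _ _ P_ge0) -/b !rmorphM rmorphN /= r_real.
have -> : (- b^* * r) * ((- b * r) * q + b) + ((- b * r) * b^* + 0)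
          = - (b * b^* * (r * r * (q + 2%:R))).
  by rewrite /r; field; rewrite gt_eqF.
rewrite oppr_ge0 pmulr_lle0 => [bb_le0|]; last first.
  by rewrite !mulr_gt0 ?invr_gt0 // ltr_wpDl.
by apply/eqP; rewrite -mul_conjC_eq0 eq_le bb_le0 mul_conjC_ge0.
Qed.
End KernelForm.

Lemma psd_formE n (M : Mat n) (v : 'cV_n) : (adjmx v *m M *m v) 0 0 = form M (v^~ 0) (v^~ 0).
Proof.
rewrite mxE /form; under eq_bigr do rewrite mxE big_distrl /=.
by rewrite exchange_big; apply: eq_bigr => p _; apply: eq_bigr => q _; rewrite !mxE.
Qed.

Lemma psd_posform n (M : Mat n) : psd M <-> posform M.
Proof.
split=> [M_psd w|M_ge0 v]; last by rewrite psd_formE.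
by have := M_psd (\col_p w p); rewrite psd_formE (@eq_form _ _ _ w _ w) // => p; rewrite mxE.
Qed.

Lemma psdZ n (c : algC) (M : Mat n) : 0 <= c -> psd M -> psd (c *: M).
Proof. by move=> c_ge0 M_psd v; rewrite -scalemxAr -scalemxAl mxE mulr_ge0. Qed.

Lemma psd_diag_ge0 n (M : Mat n) p : psd M -> 0 <= M p p.
Proof. by move/psd_posform/(_ (ket p)); rewrite form_ket. Qed.

Lemma psd_tr_ge0 n (M : Mat n) : psd M -> 0 <= \tr M.
Proof. by move=> M_psd; apply: sumr_ge0 => p _; apply: psd_diag_ge0. Qed.

Lemma psd_tr_eq0 n (M : Mat n) : psd M -> \tr M = 0 -> M = 0.
Proof.
move=> M_psd /psumr_eq0P diag0; apply/matrixP => p q; rewrite mxE -form_ket.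
have /psd_posform M_ge0 := M_psd.
apply: posform_isotropic => //; rewrite form_ket diag0 // => r _.
exact: psd_diag_ge0.
Qed.

Definition ketbra n (w : 'I_n -> algC) : Mat n := \matrix_(p, q) (w p * (w q)^*).

Lemma psd_ketbra n (w : 'I_n -> algC) : psd (ketbra w).
Proof.
apply/psd_posform => u; rewrite /form.
under eq_bigr do under eq_bigr do rewrite mxE.
by rewrite -/(form _ u u) form_rank1 mul_conjC_ge0.
Qed.

Lemma state_ketbra_ket n (p : 'I_n) : state (ketbra (ket p)).
Proof.
split; first exact: psd_ketbra.
rewrite /mxtrace -[RHS](sum_ket p (fun=> 1)); apply: eq_bigr => q _.
by rewrite mxE /ket rmorph_nat -natrM mulnb andbb mulr1.
Qed.

Section LinearMap.
Variables (n m : nat) (f : Mat n -> Mat m).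
Hypothesis f_lin : linmap f.

Lemma lin0 : f 0 = 0.
Proof.
have := f_lin 1 0 0; rewrite !scale1r !addr0 => f00.
by apply: (addrI (f 0)); rewrite addr0 -f00.
Qed.

Lemma linD A B : f (A + B) = f A + f B.
Proof. by rewrite -[A in LHS]scale1r f_lin scale1r. Qed.

Lemma linZ a A : f (a *: A) = a *: f A.
Proof. by rewrite -[_ *: A]addr0 f_lin lin0 addr0. Qed.

Lemma lin_sum (I : Type) (r : seq I) (Q : pred I) (F : I -> Mat n) :
  f (\sum_(i <- r | Q i) F i) = \sum_(i <- r | Q i) f (F i).
Proof. exact: (big_morph f linD lin0). Qed.

Lemma lin_matrix_unit X : f X = \sum_i \sum_j X i j *: f (delta_mx i j).
Proof.
rewrite {1}(matrix_sum_delta X) lin_sum; apply: eq_bigr => i _.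
by rewrite lin_sum; apply: eq_bigr => j _; rewrite linZ.
Qed.

Lemma ketbra_unit_vecs (i j : 'I_n) (l : algC) :
  ketbra (fun p => l * ket j p + ket i p) =
  ketbra (ket i) + l^* *: delta_mx i j + l *: delta_mx j i + (l * l^*) *: ketbra (ket j).
Proof.
apply/matrixP => p q; rewrite !mxE /ket !rmorphD !rmorphM !rmorph_nat /=.
by rewrite -!mulnb !natrM; ring.
Qed.

(* Multiples of states give every [ketbra w], and these span all matrices by polarization. *)
Lemma linmap_eq0_on_states : (forall rho, state rho -> f rho = 0) -> forall X, f X = 0.
Proof.
move=> f_states X.
have f_ketbra w : f (ketbra w) = 0.
  have [tr0|tr_neq0] := eqVneq (\tr (ketbra w)) 0.
    by rewrite (psd_tr_eq0 (psd_ketbra w) tr0) lin0.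
  rewrite -[ketbra w](scale1r) -(mulfV tr_neq0) -scalerA linZ f_states ?scaler0 //.
  split; first by apply: psdZ (psd_ketbra w); rewrite invr_ge0; apply/psd_tr_ge0/psd_ketbra.
  by rewrite mxtraceZ mulVf.
have polar i j l : l^* *: f (delta_mx i j) + l *: f (delta_mx j i) = 0.
  have := f_ketbra (fun p => l * ket j p + ket i p).
  by rewrite ketbra_unit_vecs !linD !linZ !f_ketbra scaler0 add0r addr0.
rewrite lin_matrix_unit big1 // => i _; rewrite big1 // => j _.
move: (polar i j 1) (polar i j 'i); rewrite conjCi rmorph1 !scale1r scaleNr.
set A := f _; set B := f _ => sum0 diff0.
have BA : B = A.
  by apply: (scalerI (neq0Ci algC)); apply/eqP; rewrite -subr_eq0 addrC diff0.
have : 2%:R *: A = 0 by rewrite scaler_nat mulr2n -{2}BA.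
by move/eqP; rewrite scaler_eq0 pnatr_eq0 /= => /eqP ->; rewrite scaler0.
Qed.
End LinearMap.

Lemma linmap_eq_on_states n m (f g : Mat n -> Mat m) : linmap f -> linmap g ->
  (forall rho, state rho -> f rho = g rho) -> forall X, f X = g X.
Proof.
move=> f_lin g_lin fg X; apply/eqP; rewrite -subr_eq0; apply/eqP.
apply: (@linmap_eq0_on_states _ _ (fun X => f X - g X)) => [a A B|rho rho_state].
  by rewrite f_lin g_lin scalerBr opprD addrACA.
by rewrite fg ?subrr.
Qed.

Lemma linmap_comp n m p (f : Mat n -> Mat m) (g : Mat m -> Mat p) :
  linmap f -> linmap g -> linmap (fun X => g (f X)).
Proof. by move=> f_lin g_lin a A B; rewrite f_lin g_lin. Qed.

Lemma linmap_sum (Y : finType) n m (F : Y -> Mat n -> Mat m) :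
  (forall y, linmap (F y)) -> linmap (fun X => \sum_y F y X).
Proof.
by move=> F_lin a A B; rewrite scaler_sumr -big_split; apply: eq_bigr => y _; apply: F_lin.
Qed.

Lemma linmap_ptr2 k v : linmap (@ptr2 k v).
Proof.
move=> a A B; apply/matrixP => p q; rewrite !mxE big_distrr -big_split /=.
by apply: eq_bigr => i _; rewrite !mxE.
Qed.

Lemma mxvec_index_inj m n : injective (uncurry (@mxvec_index m n)).
Proof. exact/bij_inj/onT_bij/curry_mxvec_bij. Qed.

Lemma mxvec_index_eq m n (i j : 'I_m) (a b : 'I_n) :
  (mxvec_index i a == mxvec_index j b) = (i == j) && (a == b).
Proof.
by apply/eqP/andP => [/(@mxvec_index_inj _ _ (i, a) (j, b)) [-> ->]|[/eqP -> /eqP ->]].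
Qed.

Lemma ampl_mxvecE k n m (f : Mat n -> Mat m) (X : Mat (k * n)) i j p q :
  ampl f X (mxvec_index i p) (mxvec_index j q) = f (blk X i j) p q.
Proof.
have embE i' j' (Y : Mat m) :
    embblk i' j' Y (mxvec_index i p) (mxvec_index j q) = ket i i' * (ket j j' * Y p q).
  rewrite mxE (bigD1 p) //= [X in _ + X]big1 ?addr0; last first.
    move=> a /negbTE a_neq; rewrite big1 // => b _.
    by rewrite !mxvec_index_eq [p == _]eq_sym a_neq andbF mul0r.
  rewrite (bigD1 q) //= [X in _ + X]big1 ?addr0; last first.
    by move=> b /negbTE b_neq; rewrite !mxvec_index_eq [q == _]eq_sym b_neq !andbF mul0r.
  by rewrite !mxvec_index_eq !eqxx !andbT /ket [i' == _]eq_sym [j' == _]eq_sym -mulnb natrM mulrA.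
rewrite -(sum_ket j (fun j' => f (blk X i j') p q)).
rewrite -(sum_ket i (fun i' => \sum_j' ket j j' * f (blk X i' j') p q)).
rewrite summxE; apply: eq_bigr => i' _; rewrite summxE big_distrr; apply: eq_bigr => j' _.
exact: embE.
Qed.

Lemma posform_reindex (T T' : finType) (g : T' -> T) (P : T -> T -> algC) P' :
  bijective g -> (forall s t, P' s t = P (g s) (g t)) -> posform P -> posform P'.
Proof.
move=> g_bij P'E P_ge0 w; have [g' gK g'K] := g_bij.
have g_onbij : {on [pred s | true], bijective g} by apply: onW_bij.
have := P_ge0 (w \o g'); rewrite /form (reindex g g_onbij); congr (0 <= _).
apply: eq_bigr => s _; rewrite (reindex g g_onbij); apply: eq_bigr => t _.
by rewrite P'E /= !gK.
Qed.

Definition choi n m (f : Mat n -> Mat m) (s t : 'I_n * 'I_m) : algC :=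
  f (delta_mx s.1 t.1) s.2 t.2.

Lemma blk_max_entangled n (i j : 'I_n) :
  blk (ketbra (mxvec (1%:M : Mat n) 0)) i j = delta_mx i j.
Proof.
apply/matrixP => a b; rewrite !mxE !mxvecE !mxE rmorph_nat -natrM mulnb.
by rewrite [i == a]eq_sym [j == b]eq_sym.
Qed.

(* The Choi kernel is read off the amplification of [f] at [|Omega><Omega|], Omega = vec 1. *)
Lemma cp_choi n m (f : Mat n -> Mat m) : cp f -> posform (choi f).
Proof.
move=> f_cp; have /psd_posform := f_cp n _ (psd_ketbra (mxvec (1%:M : Mat n) 0)).
apply: (posform_reindex (onT_bij (curry_mxvec_bij n m))) => -[i p] [j q].
by rewrite /= ampl_mxvecE blk_max_entangled.
Qed.

Section Tensor.
Variables TA TB : finType.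
Implicit Types (Q : TA * TB -> TA * TB -> algC) (u : TA -> algC) (w : TB -> algC).

Definition tens u w (s : TA * TB) := u s.1 * w s.2.

Lemma ket_pair a b : ket (a, b) =1 tens (ket a) (ket b).
Proof. by move=> [a' b']; rewrite /ket /tens xpair_eqE -mulnb natrM. Qed.

Lemma form_pair Q (w z : TA * TB -> algC) :
  form Q w z = \sum_a \sum_b \sum_a' \sum_b' (w (a, b))^* * Q (a, b) (a', b') * z (a', b').
Proof.
rewrite [RHS]pair_big; apply: eq_bigr => -[a b] _ /=.
by rewrite [RHS]pair_big; apply: eq_bigr => -[a' b'] _.
Qed.

Lemma form_tens Q u u' w w' :
  form Q (tens u w) (tens u' w') =
  form (fun b b' => form (fun a a' => Q (a, b) (a', b')) u u') w w'.
Proof.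
rewrite form_pair exchange_big; apply: eq_bigr => b _ /=.
under eq_bigr do rewrite exchange_big.
rewrite exchange_big; apply: eq_bigr => b' _ /=.
rewrite [form _ u u']/form [in RHS]big_distrr [in RHS]big_distrl; apply: eq_bigr => a _ /=.
rewrite [in RHS]big_distrr [in RHS]big_distrl; apply: eq_bigr => a' _ /=.
by rewrite /tens rmorphM; ring.
Qed.

Lemma form_tens_ket Q u u' b b' :
  form Q (tens u (ket b)) (tens u' (ket b')) = form (fun a a' => Q (a, b) (a', b')) u u'.
Proof. by rewrite form_tens form_ket. Qed.

(* If [Q] is [c c^* (x) R], this recovers [R]; [x / 0 = 0] makes it [0] when [c = 0]. *)
Definition tens_factor (c : TA -> algC) Q b b' :=
  form (fun a a' => Q (a, b) (a', b')) c c / vnorm2 c ^+ 2.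
End Tensor.

Section RankOneMarginal.
Variables (TA TB Y : finType) (c : TA -> algC) (P : Y -> TA * TB -> TA * TB -> algC).
Hypothesis P_ge0 : forall y, posform (P y).
Hypothesis P_marg : forall a a', \sum_y \sum_b P y (a, b) (a', b) = c a * (c a')^*.

Lemma tens_factor_posform y : posform (tens_factor c (P y)).
Proof.
move=> w; rewrite /tens_factor formMr -(form_tens (P y)).
by rewrite divr_ge0 ?exprn_ge0 ?P_ge0 ?vnorm2_ge0.
Qed.

Lemma orth_tens_kernel u : \sum_a (u a)^* * c a = 0 ->
  forall y b z, form (P y) z (tens u (ket b)) = 0.
Proof.
move=> u_orth y b z.
have nonneg y' b' : 0 <= form (P y') (tens u (ket b')) (tens u (ket b')) by apply: P_ge0.
(* By the marginal condition, the diagonal values below add up to |<u, c>|^2 = 0. *)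
have total0 : \sum_y \sum_b form (P y) (tens u (ket b)) (tens u (ket b)) = 0.
  under eq_bigr do under eq_bigr do rewrite form_tens_ket.
  under eq_bigr do rewrite form_sum.
  by rewrite form_sum (eq_form_kernel _ _ P_marg) form_rank1 u_orth mul0r.
have row0 : \sum_b form (P y) (tens u (ket b)) (tens u (ket b)) = 0.
  by move/psumr_eq0P: total0; apply=> // y' _; apply: sumr_ge0 => b' _.
apply: posform_isotropic => //.
by move/psumr_eq0P: row0; apply.
Qed.

Lemma marginal_rank1_factor y a b a' b' : P y (a, b) (a', b') = c a * (c a')^* * tens_factor c (P y) b b'.
Proof.
rewrite -form_ket (eq_form _ (ket_pair a b) (ket_pair a' b')).
have [/vnorm2_eq0 c_eq0|c_neq0] := eqVneq (vnorm2 c) 0.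
  by rewrite c_eq0 !mul0r orth_tens_kernel // big1 // => a1 _; rewrite c_eq0 mulr0.
(* Split each ket along c: the component orthogonal to c lies in the kernel. *)
have c_real : (vnorm2 c)^* = vnorm2 c := geC0_conj (vnorm2_ge0 c).
pose u a0 a1 := ket a0 a1 - (c a0)^* / vnorm2 c * c a1.
have u_orth a0 : \sum_a (u a0 a)^* * c a = 0.
  transitivity (\sum_a ket a0 a * c a - c a0 / vnorm2 c * vnorm2 c).
    rewrite [X in _ - _ * X]/vnorm2 mulr_sumr -sumrB; apply: eq_bigr => a1 _.
    by rewrite /u /ket rmorphB !rmorphM fmorphV /= c_real conjCK rmorph_nat; ring.
  by rewrite sum_ket divfK ?subrr.
have split_ket a0 (b0 : TB) : tens (ket a0) (ket b0) =1
    (fun s => (c a0)^* / vnorm2 c * tens c (ket b0) s + tens (u a0) (ket b0) s).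
  by move=> s; rewrite /tens /u; ring.
rewrite (eq_form _ (split_ket a b) (split_ket a' b')) formDl !formDr.
rewrite !(orth_tens_kernel (u_orth a')) (formC (tens (u a) (ket b)) _ (P_ge0 y)).
rewrite (orth_tens_kernel (u_orth a)) rmorph0.
rewrite /tens_factor form_tens_ket rmorphM fmorphV /= c_real conjCK.
by field; exact: c_neq0.
Qed.

Lemma sum_tens_factor : vnorm2 c != 0 -> \sum_y \sum_b tens_factor c (P y) b b = 1.
Proof.
move=> c_neq0; apply: (mulfI c_neq0); rewrite mulr1 [LHS]mulr_suml; apply: eq_bigr => a _.
rewrite -[RHS]P_marg mulr_sumr; apply: eq_bigr => y _; rewrite mulr_sumr; apply: eq_bigr => b _.
by rewrite marginal_rank1_factor.
Qed.
End RankOneMarginal.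

Lemma psd_normalize (Y : finType) v (b0 : 'I_v) (T : Y -> Mat v) :
  (forall y, psd (T y)) -> \sum_y \tr (T y) = 1 ->
  exists (nu : Y -> algC) (xi : Y -> Mat v),
    [/\ forall y, state (xi y), forall y, 0 <= nu y, \sum_y nu y = 1 &
         forall y, T y = nu y *: xi y].
Proof.
move=> T_psd T_tr; exists (fun y => \tr (T y)).
exists (fun y => if \tr (T y) == 0 then ketbra (ket b0) else (\tr (T y))^-1 *: T y).
split=> // y; first case: eqP => [_|/eqP tr_neq0].
- exact: state_ketbra_ket.
- split; last by rewrite mxtraceZ mulVf.
  by apply: psdZ (T_psd y); rewrite invr_ge0 psd_tr_ge0.
- exact: psd_tr_ge0.
case: eqP => [tr0|/eqP tr_neq0]; first by rewrite tr0 scale0r (psd_tr_eq0 (T_psd y) tr0).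
by rewrite scalerA mulfV ?scale1r.
Qed.

Lemma kraus_mxE k h (K : 'M[algC]_(k, h)) (X : Mat h) a a' :
  (K *m X *m adjmx K) a a' = \sum_i \sum_j K a i * X i j * (K a' j)^*.
Proof.
rewrite mxE; under eq_bigr do rewrite !mxE big_distrl /=.
by rewrite exchange_big; apply: eq_bigr => i _; apply: eq_bigr => j _.
Qed.

Lemma kraus_delta_mxE k h (K : 'M[algC]_(k, h)) i j a a' :
  (K *m delta_mx i j *m adjmx K) a a' = K a i * (K a' j)^*.
Proof.
rewrite kraus_mxE -(sum_ket i (fun i0 => K a i0 * (K a' j)^*)); apply: eq_bigr => i0 _.
rewrite -(sum_ket j (fun j0 => K a i0 * (K a' j0)^*)) mulr_sumr; apply: eq_bigr => j0 _.
by rewrite mxE /ket -mulnb natrM; ring.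
Qed.

Definition choi_tens h k v (f : Mat h -> Mat (k * v)) (s t : 'I_h * 'I_k * 'I_v) :=
  choi f (s.1.1, mxvec_index s.1.2 s.2) (t.1.1, mxvec_index t.1.2 t.2).

Lemma cp_choi_tens h k v (f : Mat h -> Mat (k * v)) : cp f -> posform (choi_tens f).
Proof.
have g_bij : bijective (fun s : 'I_h * 'I_k * 'I_v => (s.1.1, mxvec_index s.1.2 s.2)).
  apply: inj_card_bij; last by rewrite !card_prod !card_ord mulnA.
  move=> [[i a] b] [[j a'] b'] eq_g.
  have /(@mxvec_index_inj _ _ (a, b) (a', b')) [-> ->] := congr1 snd eq_g.
  by have /= -> := congr1 fst eq_g.
by move/cp_choi; apply: posform_reindex g_bij _.
Qed.

Section KrausMarginal.
Variables (Y : finType) (h k v : nat) (K : 'M[algC]_(k, h)) (G : Y -> Mat h -> Mat (k * v)).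
Hypothesis G_lin : forall y, linmap (G y).
Hypothesis G_cp : forall y, cp (G y).
Hypothesis G_marg : forall X, \sum_y ptr2 (G y X) = K *m X *m adjmx K.

Let c (s : 'I_h * 'I_k) := K s.2 s.1.

Let choi_marg s s' : \sum_y \sum_b choi_tens (G y) (s, b) (s', b) = c s * (c s')^*.
Proof.
case: s s' => [i a] [j a']; rewrite /c -kraus_delta_mxE -G_marg summxE.
by apply: eq_bigr => y _; rewrite mxE.
Qed.

Let choi_ge0 y : posform (choi_tens (G y)) := cp_choi_tens (G_cp y).

Lemma ptr1_kraus_marginal y rho :
  ptr1 (G y rho) = \tr (K *m rho *m adjmx K) *: \matrix_(b, b') tens_factor c (choi_tens (G y)) b b'.
Proof.
apply/matrixP => b b'; rewrite !mxE mulr_suml; apply: eq_bigr => a _.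
rewrite kraus_mxE (lin_matrix_unit (G_lin y)) summxE mulr_suml; apply: eq_bigr => i _.
rewrite summxE mulr_suml; apply: eq_bigr => j _.
have := marginal_rank1_factor choi_ge0 choi_marg y (i, a) b (j, a) b'.
by rewrite mxE /choi_tens /choi /= => ->; rewrite /c /=; ring.
Qed.

Lemma ptr1_kraus_marginal_stochastic (y0 : Y) (b0 : 'I_v) :
  exists (nu : Y -> algC) (xi : Y -> Mat v),
    [/\ forall y, state (xi y), forall y, 0 <= nu y, \sum_y nu y = 1 &
         forall y rho, ptr1 (G y rho) = (nu y * \tr (K *m rho *m adjmx K)) *: xi y].
Proof.
suff [T [T_psd T_tr ptr1E]] : exists T : Y -> Mat v, [/\ forall y, psd (T y),
    \sum_y \tr (T y) = 1 & forall y rho, ptr1 (G y rho) = \tr (K *m rho *m adjmx K) *: T y].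
  have [nu [xi [xi_state nu_ge0 nu_sum TE]]] := psd_normalize b0 T_psd T_tr.
  by exists nu, xi; split=> // y rho; rewrite ptr1E TE scalerA mulrC.
have [/vnorm2_eq0 c0|c_neq0] := eqVneq (vnorm2 c) 0.
  have K0 : K = 0 by apply/matrixP => a i; rewrite mxE; exact: c0 (i, a).
  exists (fun y => (y == y0)%:R *: ketbra (ket b0)); split.
  - by move=> y; apply: psdZ (psd_ketbra _); rewrite ler0n.
  - rewrite -[RHS](sum_ket y0 (fun=> 1)); apply: eq_bigr => y _.
    by rewrite mxtraceZ (state_ketbra_ket b0).2.
  - by move=> y rho; rewrite ptr1_kraus_marginal K0 !mul0mx mxtrace0 !scale0r.
exists (fun y => \matrix_(b, b') tens_factor c (choi_tens (G y)) b b'); split => [y||].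
- apply/psd_posform; apply: eq_posform _ (tens_factor_posform c choi_ge0 y).
  by move=> b b'; rewrite mxE.
- rewrite -(sum_tens_factor choi_ge0 choi_marg c_neq0); apply: eq_bigr => y _.
  by apply: eq_bigr => b _; rewrite mxE.
- exact: ptr1_kraus_marginal.
Qed.
End KrausMarginal.

Lemma indecomposable_kraus (Omega : finType) h k (I : Omega -> Mat h -> Mat k) x :
  indecomposable I ->
  exists K : 'M_(k, h), forall rho, I x rho = K *m rho *m adjmx K.
Proof.
move=> I_indec; have [I_neq0|I_eq0] := classic (exists rho, I x rho != 0).
  exact: I_indec.
exists 0 => rho; rewrite !mul0mx; apply/eqP/negPn/negP => Ix_neq0.
by apply: I_eq0; exists rho.
Qed.

Lemma instrument_nonempty (Y : finType) h v (J : Y -> Mat h -> Mat v) :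
  (0 < h)%N -> instrument J -> (0 < #|Y|)%N /\ (0 < v)%N.
Proof.
move=> h_gt0 [_ J_tp]; have := J_tp 1%:M; rewrite mxtrace1 => trJ.
have tr_neq0 : \tr (\sum_y J y 1%:M) != 0 by rewrite trJ pnatr_eq0 -lt0n.
split; rewrite lt0n; apply: contra tr_neq0 => /eqP empty.
  by rewrite big1 ?mxtrace0 // => y _; move: (card0_eq empty y); rewrite !inE.
by apply/eqP/big1 => -[b b_lt] _; exfalso; rewrite empty in b_lt.
Qed.

Theorem corollary6 (Omega Lambda : finType) (h k v : nat) (hpos : (0 < h)%N)
  (I : Omega -> Mat h -> Mat k) (A : Omega -> Mat h) :
  instrument I -> indecomposable I -> induced_povm I A ->
  forall J : Lambda -> Mat h -> Mat v,
    instrument J -> compatible I J ->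
    exists (xi : Omega -> Lambda -> Mat v) (nu : Omega -> Lambda -> algC),
      (forall x y, state (xi x y)) /\
      (forall x y, 0 <= nu x y) /\ (forall x, \sum_y nu x y = 1) /\
      (forall y (rho : Mat h), state rho ->
         J y rho = \sum_x \tr (nu x y *: (A x *m rho)) *: xi x y).
Proof.
move=> I_ins I_indec I_povm J J_ins [G [[G_ins _] [GJ GI]]].
have [/card_gt0P [y0 _] v_gt0] := instrument_nonempty hpos J_ins.
have G_lin xy : linmap (G xy) by have [] := G_ins xy.
have G_cp xy : cp (G xy) by have [] := G_ins xy.
have per_x x : exists nx : (Lambda -> algC) * (Lambda -> Mat v),
    [/\ forall y, state (nx.2 y), forall y, 0 <= nx.1 y, \sum_y nx.1 y = 1 &
         forall y rho, state rho -> ptr1 (G (x, y) rho) = \tr (nx.1 y *: (A x *m rho)) *: nx.2 y].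
  have [Ix_lin _ _] := I_ins.1 x.
  have [K IxK] := indecomposable_kraus x I_indec.
  have G_marg X : \sum_y ptr2 (G (x, y) X) = K *m X *m adjmx K.
    rewrite -IxK; move: X; apply: linmap_eq_on_states _ Ix_lin (GI x).
    by apply: linmap_sum => y; apply: linmap_comp (G_lin _) (@linmap_ptr2 k v).
  have [nu [xi [xi_state nu_ge0 nu_sum ptr1E]]] := ptr1_kraus_marginal_stochastic
    (fun y => G_lin (x, y)) (fun y => G_cp (x, y)) G_marg y0 (Ordinal v_gt0).
  exists (nu, xi); split=> // y rho rho_state.
  by rewrite ptr1E mxtraceZ I_povm // IxK.
have [nx /all_and4 [xi_state nu_ge0 nu_sum ptr1E]] := fin_all_exists per_x.
exists (fun x => (nx x).2), (fun x => (nx x).1); split=> //; split=> //; split=> // y rho rho_state.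
by rewrite -GJ //; apply: eq_bigr => x _; rewrite ptr1E.
Qed.
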